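(* Let $W=W_0\supset W_1\supset W_2\supset\cdots$ be a filtered Lie algebra with $\bigcap_{i\ge 0}W_i=0$ and $[W_i,W_j]\subset W_{i+j}$. Let $v^0,v^1,v^2,\dots$ be elements of $W$ such that $v^{q+1}-v^{q}\in W_{q+1}$ for all $q\ge 0$. Put $K_i=W_i\oplus W_i$ for $i\ge 0$ (and $K_i=K_0$ for $i<0$), and define linear maps $\partial_q:K_0\to K_0$ by $\partial_{-1}=0$ and $\partial_q(x,y)=([v^q,y],0)$ for $q\ge 0$. For $r\ge -1$ and integers $p$ let $Z^r_p=\{z\in K_p:\ \partial_r z\in K_{p+r}\}$. Then for every $r\ge 0$ and every $p\ge 0$: if $z\in Z^r_p$ or $z\in Z^{r-1}_p$, then $\partial_r z-\partial_{r-1}z\in Z^{r-1}_{p+r}$.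
   Context: This is the complex used to model normal form computations: the first summand of $K_i$ is the space in which the normal form lives, the second the space of transformations, and $v^q$ is the vector field after $q$ normalization steps. *)

From HB Require Import structures.
From mathcomp Require Import all_boot all_order all_algebra.
Set Implicit Arguments. Unset Strict Implicit. Unset Printing Implicit Defensive.
Import Order.TTheory GRing.Theory Num.Theory.
Local Open Scope ring_scope.

Definition is_lie_bracket (R : fieldType) (W : lmodType R) (br : W -> W -> W) : Prop :=
  [/\ (forall (a : R) (x y z : W), br (a *: x + y) z = a *: br x z + br y z),
      (forall (a : R) (x y z : W), br x (a *: y + z) = a *: br x y + br x z),
      (forall x : W, br x x = 0) &
      (forall x y z : W, br x (br y z) + br y (br z x) + br z (br x y) = 0)].

Definition is_lie_filtration (R : fieldType) (W : lmodType R) (br : W -> W -> W)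
    (Wf : nat -> {pred W}) : Prop :=
  [/\ (forall i, submod_closed (Wf i)),
      (forall x, x \in Wf 0%N),
      (forall i x, x \in Wf i.+1 -> x \in Wf i),
      (forall x, (forall i, x \in Wf i) -> x = 0) &
      (forall i j x y, x \in Wf i -> y \in Wf j -> br x y \in Wf (i + j)%N)].

Section Complex.
Variables (R : fieldType) (W : lmodType R) (br : W -> W -> W)
  (Wf : nat -> {pred W}) (v : nat -> W).

Definition Kf (i : int) : {pred W * W} :=
  let n := match i with Posz n => n | Negz _ => 0%N end in
  [pred z : W * W | (z.1 \in Wf n) && (z.2 \in Wf n)].

Definition del (q : int) (z : W * W) : W * W :=
  match q with Posz n => (br (v n) z.2, 0) | Negz _ => 0 end.

Definition Zf (r p : int) : {pred W * W} :=
  [pred z | (z \in Kf p) && (del r z \in Kf (p + r))].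

End Complex.

From HB Require Import structures.
From mathcomp Require Import all_boot all_order all_algebra.
Set Implicit Arguments. Unset Strict Implicit. Unset Printing Implicit Defensive.
Import Order.TTheory GRing.Theory Num.Theory.
Local Open Scope ring_scope.

(* Only the second component y of z = (x, y) matters, and z ∈ K_p gives
   y ∈ W_p.  The difference ∂_r z - ∂_{r-1} z is ([v^r - v^{r-1}, y], 0)
   (with v^{-1} = 0), whose first entry lies in W_{r+p} because
   v^r - v^{r-1} ∈ W_r; a pair with zero second entry is killed by every ∂,
   so it lies in every Z^{r-1}. *)

Section LieBracket.
Variables (R : fieldType) (W : lmodType R) (br : W -> W -> W).
Hypothesis br_lie : is_lie_bracket br.

Lemma lie_bracket0r x : br x 0 = 0.
Proof.
case: br_lie => _ linr _ _; have := linr 1 x 0 0; rewrite !scale1r addr0 => E.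
by apply: (addrI (br x 0)); rewrite -E addr0.
Qed.

Lemma lie_bracketBl x y z : br (x - y) z = br x z - br y z.
Proof.
case: br_lie => linl _ _ _; have := linl (-1) y x z.
by rewrite !scaleN1r addrC => ->; apply: addrC.
Qed.

Lemma del_pair0 (v : nat -> W) (q : int) x : del br v q (x, 0) = 0.
Proof. by case: q => [n|n] //=; rewrite lie_bracket0r. Qed.

(* The convention v^{-1} = 0 at r = 0 matches ∂_{-1} = 0. *)
Definition v_inc (v : nat -> W) (r : nat) : W :=
  v r - (if r is n.+1 then v n else 0).

Lemma delB_pred (v : nat -> W) (r : nat) (z : W * W) :
  del br v r%:Z z - del br v (r%:Z - 1) z = (br (v_inc v r) z.2, 0).
Proof.
case: r => [|n]; first by rewrite /v_inc !subr0.
have -> : (n.+1%:Z - 1 : int) = n%:Z by rewrite -addn1 PoszD addrK.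
by rewrite /v_inc lie_bracketBl; congr (_, _); rewrite subr0.
Qed.

Section Filtration.
Variable Wf : nat -> {pred W}.
Hypothesis Wf_lie : is_lie_filtration br Wf.
Variable v : nat -> W.

Lemma Wf0 i : (0 : W) \in Wf i.
Proof. by case: Wf_lie => Wf_submod _ _ _ _; case: (Wf_submod i). Qed.

Lemma Wf_bracket i j x y : x \in Wf i -> y \in Wf j -> br x y \in Wf (i + j).
Proof. by case: Wf_lie => _ _ _ _; apply. Qed.

Lemma v_inc_mem r :
  (forall q, v q.+1 - v q \in Wf q.+1) -> v_inc v r \in Wf r.
Proof.
move=> v_step; case: r => [|n]; last exact: v_step.
by rewrite /v_inc subr0; case: Wf_lie.
Qed.

Lemma Zf_snd (r : int) (p : nat) z : z \in Zf br Wf v r p -> z.2 \in Wf p.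
Proof. by case/andP=> /andP[]. Qed.

Lemma mem_Zf_pair0 (r : int) (p : nat) x : x \in Wf p -> (x, 0) \in Zf br Wf v r p.
Proof. by move=> Wx; rewrite !inE /= Wx del_pair0 /= !Wf0. Qed.

End Filtration.
End LieBracket.

Theorem mainTheorem1 (R : fieldType) (W : lmodType R) (br : W -> W -> W)
    (Wf : nat -> {pred W}) (v : nat -> W) :
  is_lie_bracket br ->
  is_lie_filtration br Wf ->
  (forall q : nat, v q.+1 - v q \in Wf q.+1) ->
  forall (r p : nat) (z : W * W),
    (z \in Zf br Wf v r%:Z p%:Z \/ z \in Zf br Wf v (r%:Z - 1) p%:Z) ->
    del br v r%:Z z - del br v (r%:Z - 1) z \in Zf br Wf v (r%:Z - 1) (p%:Z + r%:Z).
Proof.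
move=> br_lie Wf_lie v_step r p z z_Z.
have y_p : z.2 \in Wf p by case: z_Z => /Zf_snd.
rewrite delB_pred // -PoszD; apply: (mem_Zf_pair0 br_lie Wf_lie).
rewrite addnC; exact: (Wf_bracket Wf_lie (v_inc_mem Wf_lie r v_step) y_p).
Qed.
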